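(* Let $(V_1,\dots,V_n)$ be an $n$-tuple of doubly non-commuting isometries on $H$, let $A=\{i_1,\dots,i_l\}\subseteq\{1,\dots,n\}$ be non-empty with $A^c=\{j_1,\dots,j_{n-l}\}$. Suppose $L$ is a subspace of $H_A$ invariant under $V_{j_1},\dots,V_{j_{n-l}}$ such that $H_A=\bigoplus_{k_{i_1},\dots,k_{i_l}\ge0}V_{i_1}^{k_{i_1}}\cdots V_{i_l}^{k_{i_l}}(L)$ as an orthogonal Hilbert direct sum. Then $L=W_A$.
   Context: Fix $n\ge1$ and $z_{ij}\in\mathbb T$ ($i\ne j$) with $z_{ji}=\overline{z_{ij}}$; $(V_1,\dots,V_n)$ is doubly non-commuting if the $V_i$ are isometries with $V_i^*V_j=\overline{z_{ij}}V_jV_i^*$ for $i\ne j$. For an isometry $S$: $H^{\mathrm{iso}}(S)=\bigoplus_{k\ge0}S^k(\ker S^* )$, $H^{\mathrm{uni}}(S)=\bigcap_{k\ge0}S^k(H)$. $H_A=\bigcap_{i\in A}H^{\mathrm{iso}}(V_i)\cap\bigcap_{i\in A^c}H^{\mathrm{uni}}(V_i)$ (intersection over empty index set $=H$). $W_A=\bigcap_{m_{j_1},\dots,m_{j_{n-l}}\ge0}V_{j_1}^{m_{j_1}}\cdots V_{j_{n-l}}^{m_{j_{n-l}}}\big(\bigcap_{i\in A}\ker V_i^*\big)$ (for $A=\{1,\dots,n\}$, $W_A=\bigcap_i\ker V_i^*$). Subspaces are closed. *)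

From HB Require Import structures.
From mathcomp Require Import all_boot all_order all_algebra.
From mathcomp Require Import complex.
From mathcomp Require Import boolp classical_sets reals.
Set Implicit Arguments. Unset Strict Implicit. Unset Printing Implicit Defensive.
Import Order.TTheory GRing.Theory Num.Theory.
Local Open Scope ring_scope.
Local Open Scope complex_scope.
Local Open Scope classical_set_scope.

Section Hilbert.
Variables (R : realType) (H : lmodType R[i]) (ip : H -> H -> R[i]).

Definition is_inner_product : Prop :=
  [/\ forall (a : R[i]) (x y z : H), ip (a *: x + y) z = a * ip x z + ip y z,
      forall x y : H, ip y x = (ip x y)^*,
      forall x : H, 0 <= ip x x
    & forall x : H, ip x x = 0 -> x = 0].

Definition hnorm (x : H) : R[i] := sqrtc (ip x x).

Definition hconverges (u : nat -> H) (x : H) : Prop :=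
  forall e : R[i], 0 < e -> exists N : nat,
    forall m : nat, (N <= m)%N -> hnorm (u m - x) < e.

Definition hcauchy (u : nat -> H) : Prop :=
  forall e : R[i], 0 < e -> exists N : nat,
    forall m k : nat, (N <= m)%N -> (N <= k)%N -> hnorm (u m - u k) < e.

Definition hcomplete : Prop :=
  forall u : nat -> H, hcauchy u -> exists x : H, hconverges u x.

Definition hclosure (S : set H) : set H :=
  [set x | exists u : nat -> H, (forall k, S (u k)) /\ hconverges u x].

Definition hclosed (S : set H) : Prop := hclosure S `<=` S.

Definition is_subspace (S : set H) : Prop :=
  [/\ S 0, (forall (a : R[i]) (x y : H), S x -> S y -> S (a *: x + y))
    & hclosed S].

Definition finsums (I : Type) (D : set I) (M : I -> set H) : set H :=
  [set x | exists (s : seq I) (f : I -> H),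
     [/\ forall k, D k -> M k (f k),
         forall k, ~ D k -> f k = 0
       & x = \sum_(k <- s) f k]].

(* closed linear span of the family (M k)_{k in D}; when the family is
   orthogonal this is the Hilbert (orthogonal) direct sum  (+)_{k in D} M k *)
Definition hsum (I : Type) (D : set I) (M : I -> set H) : set H :=
  hclosure (finsums D M).

Definition orth_family (I : Type) (D : set I) (M : I -> set H) : Prop :=
  forall k k', D k -> D k' -> k <> k' ->
    forall x y, M k x -> M k' y -> ip x y = 0.

Definition is_isometry (V : H -> H) : Prop :=
  linear V /\ forall x y, ip (V x) (V y) = ip x y.

Definition is_adjoint (V Vs : H -> H) : Prop :=
  forall x y, ip (V x) y = ip x (Vs y).

Definition kerO (T : H -> H) : set H := [set x | T x = 0].

(* H^iso(S) = (+)_{k>=0} S^k (ker S^* ), with Sa the adjoint of S *)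
Definition Hiso (S Sa : H -> H) : set H :=
  hsum [set: nat] (fun k => iter k S @` kerO Sa).

Definition Huni (S : H -> H) : set H :=
  [set x | forall k : nat, exists y, x = iter k S y].

Variable n : nat.

Definition doubly_noncommuting (V Vs : 'I_n -> H -> H)
  (z : 'I_n -> 'I_n -> R[i]) : Prop :=
  [/\ forall i, is_isometry (V i),
      forall i, is_adjoint (V i) (Vs i),
      forall i j, i != j -> `|z i j| = 1 /\ z j i = (z i j)^*
    & forall i j, i != j -> forall x,
        Vs i (V j x) = (z i j)^* *: V j (Vs i x)].

(* V_{s_1}^{m s_1} ... V_{s_r}^{m s_r} x  for s = [:: s_1; ...; s_r] *)
Definition prodpow (V : 'I_n -> H -> H) (s : seq 'I_n) (m : 'I_n -> nat)
  (x : H) : H :=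
  foldr (fun i y => iter (m i) (V i) y) x s.

Definition HA (V Vs : 'I_n -> H -> H) (A : {set 'I_n}) : set H :=
  [set x | (forall i, i \in A -> Hiso (V i) (Vs i) x) /\
           (forall i, i \notin A -> Huni (V i) x)].

(* W_A = \bigcap_{m} V_{j_1}^{m_{j_1}} ... V_{j_{n-l}}^{m_{j_{n-l}}}
          (\bigcap_{i in A} ker V_i^* ), j_1 < ... < j_{n-l} enumerating A^c *)
Definition WA (V Vs : 'I_n -> H -> H) (A : {set 'I_n}) : set H :=
  [set x | forall m : 'I_n -> nat, exists y,
     (forall i, i \in A -> Vs i y = 0) /\ x = prodpow V (enum (~: A)) m y].

(* index set of tuples (k_i)_{i in A}: functions vanishing off A *)
Definition supported_on (A : {set 'I_n}) : set ('I_n -> nat) :=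
  [set k | forall i, i \notin A -> k i = 0%N].

End Hilbert.

(* Write P_k = V_{i_1}^{k_{i_1}} ... V_{i_l}^{k_{i_l}}.  Since L is closed and
   H_A is the orthogonal sum of the P_k L, a vector of H_A belongs to L as soon
   as it is orthogonal to every P_k L with k <> 0.  The relations
   V_i^* V_j = conj(z_ij) V_j V_i^* make H_A invariant under every V_t^*, and
   make each V_t commute with P_k up to a unimodular scalar.  Hence, for l in L:
   if i is in A, V_i^* l is orthogonal to all P_k L (as V_i P_k is a multiple of
   P_{k + e_i}), so it lies in L and is orthogonal to L, i.e. V_i^* l = 0; if j
   is not in A, then l = V_j y (l is in H^uni(V_j)) and y = V_j^* l is
   orthogonal to the P_k L, k <> 0, because L is V_j-invariant; so y is in L.
   This gives L <= W_A.  Conversely a vector of W_A lies in H_A and is killed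
   by the V_i^*, i in A, hence orthogonal to every P_k L with k <> 0. *)

From HB Require Import structures.
From mathcomp Require Import all_boot all_order all_algebra.
From mathcomp Require Import complex.
From mathcomp Require Import boolp classical_sets reals.
From mathcomp Require Import ring.
Import Order.TTheory GRing.Theory Num.Theory.
Local Open Scope ring_scope.
Local Open Scope complex_scope.
Local Open Scope classical_set_scope.
Set Implicit Arguments. Unset Strict Implicit. Unset Printing Implicit Defensive.

Section InnerProduct.
Variables (R : realType) (H : lmodType R[i]) (ip : H -> H -> R[i]).
Hypothesis hip : is_inner_product ip.

Lemma ipDZl a x y w : ip (a *: x + y) w = a * ip x w + ip y w.
Proof. by case: hip. Qed.

Lemma ipC x y : ip y x = (ip x y)^*%C.
Proof. by case: hip. Qed.

Lemma ip_ge0 x : 0 <= ip x x.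
Proof. by case: hip. Qed.

Lemma ip_eq0 x : ip x x = 0 -> x = 0.
Proof. by case: hip => _ _ _; apply. Qed.

Lemma ip0l w : ip 0 w = 0.
Proof.
have := ipDZl 1 0 0 w; rewrite scaler0 addr0 mul1r => e.
by rewrite -(subrr (ip 0 w)) {2}e addrK.
Qed.

Lemma ipDl x y w : ip (x + y) w = ip x w + ip y w.
Proof. by have := ipDZl 1 x y w; rewrite scale1r mul1r. Qed.

Lemma ipZl a x w : ip (a *: x) w = a * ip x w.
Proof. by have := ipDZl a x 0 w; rewrite addr0 ip0l addr0. Qed.

Lemma ipNl x w : ip (- x) w = - ip x w.
Proof. by rewrite -scaleN1r ipZl mulN1r. Qed.

Lemma ip0r x : ip x 0 = 0.
Proof. by rewrite ipC ip0l conjc0. Qed.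

Lemma ipDr x y w : ip w (x + y) = ip w x + ip w y.
Proof. by rewrite ipC ipDl rmorphD /= -!ipC. Qed.

Lemma ipZr a x w : ip w (a *: x) = a^*%C * ip w x.
Proof. by rewrite ipC ipZl rmorphM /= -ipC. Qed.

Lemma ipNr x w : ip w (- x) = - ip w x.
Proof. by rewrite ipC ipNl rmorphN /= -ipC. Qed.

Lemma ipBr x y w : ip w (x - y) = ip w x - ip w y.
Proof. by rewrite ipDr ipNr. Qed.

Lemma ipBl x y w : ip (x - y) w = ip x w - ip y w.
Proof. by rewrite ipDl ipNl. Qed.

Lemma eq_from_ip x y : (forall u, ip u x = ip u y) -> x = y.
Proof.
by move=> h; apply/eqP; rewrite -subr_eq0; apply/eqP/ip_eq0; rewrite ipBr h subrr.
Qed.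

Lemma hnorm_ge0 x : 0 <= hnorm ip x.
Proof. by rewrite sqrtc_ge0 ip_ge0. Qed.

Lemma hnorm_le x y : ip x x <= ip y y -> hnorm ip x <= hnorm ip y.
Proof. by move=> h; rewrite -ler_sqr ?nnegrE ?hnorm_ge0 // !sqr_sqrtc. Qed.

Lemma hnorm0 : hnorm ip 0 = 0.
Proof. by rewrite /hnorm ip0l sqrtc0. Qed.

Lemma hnorm_le_addr_orth u b : ip u b = 0 -> hnorm ip u <= hnorm ip (u + b).
Proof.
move=> hub; apply: hnorm_le.
rewrite ipDl !ipDr hub (ipC u b) hub conjc0 add0r addr0.
by rewrite lerDl ip_ge0.
Qed.

Lemma mem_hclosure (S : set H) x : S x -> hclosure ip S x.
Proof.
move=> Sx; exists (fun=> x); split=> // e e_gt0.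
by exists 0%N => m _; rewrite subrr hnorm0.
Qed.

Lemma hclosure_stable (T : H -> H) (S : set H) :
  {morph T : x y / x - y} -> (forall v, hnorm ip (T v) <= hnorm ip v) ->
  (forall v, S v -> S (T v)) -> forall x, hclosure ip S x -> hclosure ip S (T x).
Proof.
move=> TB T_contr TS x [u [Su u_x]]; exists (T \o u); split=> [m|e e_gt0].
  exact/TS/Su.
have [N hN] := u_x e e_gt0; exists N => m leNm.
by rewrite /= -TB (le_lt_trans (T_contr _) (hN m leNm)).
Qed.

Lemma hclosed_approx (S T : set H) y : hclosed ip S -> hclosure ip T y ->
  (forall u, T u -> exists2 a, S a & hnorm ip (a - y) <= hnorm ip (u - y)) ->
  S y.
Proof.
move=> S_closed [u [Tu u_y]] closer; apply: S_closed.
have /choice[a ha] :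
    forall m, exists a, S a /\ hnorm ip (a - y) <= hnorm ip (u m - y).
  by move=> m; have [a Sa le_a] := closer _ (Tu m); exists a.
exists a; split=> [m|e e_gt0]; first by case: (ha m).
have [N hN] := u_y e e_gt0; exists N => m leNm.
by case: (ha m) => _ /le_lt_trans; apply; apply: hN.
Qed.

End InnerProduct.

Section IteratedScalableMaps.
Variables (K : pzRingType) (E : lmodType K) (G : E -> E).
Hypothesis GZ : forall a x, G (a *: x) = a *: G x.

Lemma iter_scalable k a x : iter k G (a *: x) = a *: iter k G x.
Proof. by elim: k => //= k ->; rewrite GZ. Qed.

Lemma iter_commuteZ (F : E -> E) c : (forall x, F (G x) = c *: G (F x)) ->
  forall k x, F (iter k G x) = c ^+ k *: iter k G (F x).
Proof.
move=> FG; elim=> [|k IH] x /=; first by rewrite scale1r.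
by rewrite FG IH GZ scalerA exprS.
Qed.

End IteratedScalableMaps.

Section Isometry.
Variables (R : realType) (H : lmodType R[i]) (ip : H -> H -> R[i]).
Hypothesis hip : is_inner_product ip.
Variables (V Vs : H -> H).
Hypotheses (hV : is_isometry ip V) (hVs : is_adjoint ip V Vs).

Lemma isometry0 : V 0 = 0.
Proof. by case: hV => _ Vip; apply: (ip_eq0 hip); rewrite Vip (ip0l hip). Qed.

Lemma isometryZ a x : V (a *: x) = a *: V x.
Proof. by case: hV => Vlin _; rewrite -[a *: x]addr0 Vlin isometry0 addr0. Qed.

Lemma adjoint_ipl x y : ip (Vs x) y = ip x (V y).
Proof. by rewrite (ipC hip) -hVs -(ipC hip). Qed.

Lemma adjoint_isometryK : cancel V Vs.
Proof.
case: hV => _ Vip x; apply: (eq_from_ip hip) => u.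
by rewrite -hVs Vip.
Qed.

Lemma adjoint0 : Vs 0 = 0.
Proof. by apply: (eq_from_ip hip) => u; rewrite -hVs !(ip0r hip). Qed.

Lemma adjointD x y : Vs (x + y) = Vs x + Vs y.
Proof. by apply: (eq_from_ip hip) => u; rewrite -hVs !(ipDr hip) -!hVs. Qed.

Lemma adjointZ a x : Vs (a *: x) = a *: Vs x.
Proof. by apply: (eq_from_ip hip) => u; rewrite -hVs !(ipZr hip) -hVs. Qed.

Lemma adjointB x y : Vs (x - y) = Vs x - Vs y.
Proof. by apply: (eq_from_ip hip) => u; rewrite -hVs !(ipBr hip) -!hVs. Qed.

Lemma adjoint_contraction v : hnorm ip (Vs v) <= hnorm ip v.
Proof.
case: hV => _ Vip.
have orth : ip (V (Vs v)) (v - V (Vs v)) = 0 by rewrite (ipBr hip) hVs Vip subrr.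
by move: (hnorm_le_addr_orth hip orth); rewrite addrC subrK /hnorm Vip.
Qed.

(* Expanding the square norm of [W (V x) - c^* V (W x)] with [Vs (W (V x)) = c^* W x]
   leaves [(1 - |c|^2) <x, x>]. *)
Lemma isometry_commute (W : H -> H) c : is_isometry ip W -> `|c| = 1 ->
  (forall x, Vs (W x) = c^*%C *: W (Vs x)) ->
  forall x, W (V x) = c^*%C *: V (W x).
Proof.
case: hV hVs => _ Vip _ [_ Wip] c1 VsW x.
set a := W (V x); set b := V (W x).
have Vs_a : Vs a = c^*%C *: W x by rewrite /a VsW adjoint_isometryK.
have ip_ba : ip b a = c * ip x x by rewrite /b hVs Vs_a (ipZr hip) conjcK Wip.
have ip_ab : ip a b = c^*%C * ip x x.
  by rewrite (ipC hip) ip_ba rmorphM /= -(ipC hip).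
have cc : c * c^*%C = 1 by rewrite -sqr_normc c1 expr1n.
apply/eqP; rewrite -subr_eq0; apply/eqP/(ip_eq0 hip).
rewrite (ipBl hip) !(ipBr hip) !(ipZl hip) !(ipZr hip) conjcK ip_ab ip_ba.
rewrite /a /b !Wip !Vip !Wip.
transitivity (ip x x * (1 - c * c^*%C)); first by ring.
by rewrite cc subrr mulr0.
Qed.

End Isometry.

Lemma adjoint_kernel_stable (R : realType) (H : lmodType R[i]) (ip : H -> H -> R[i])
    (V W Vs Ws : H -> H) c :
  is_inner_product ip -> is_adjoint ip V Vs -> is_adjoint ip W Ws ->
  (forall x, W (V x) = c *: V (W x)) ->
  forall w, Vs w = 0 -> Vs (Ws w) = 0.
Proof.
move=> hip hVs hWs WV w Vs_w; apply: (eq_from_ip hip) => u.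
by rewrite -hVs -hWs WV (ipZl hip) hVs Vs_w !(ip0r hip) mulr0.
Qed.

Section ProductsOfPowers.
Variables (R : realType) (H : lmodType R[i]) (n : nat) (V : 'I_n -> H -> H).

Lemma prodpow0 s w : prodpow V s (fun=> 0%N) w = w.
Proof. by elim: s => //= a s ->. Qed.

Lemma eq_prodpow s k k' w : {in s, k =1 k'} -> prodpow V s k w = prodpow V s k' w.
Proof.
elim: s => //= a s IH kk'; rewrite kk' ?mem_head // IH // => t ts.
by apply: kk'; rewrite in_cons ts orbT.
Qed.

Lemma prodpow_single s j m w : uniq s -> j \in s ->
  prodpow V s (fun t => if t == j then m else 0%N) w = iter m (V j) w.
Proof.
elim: s => //= a s IH /andP[as_ us]; rewrite in_cons.
have [-> _|ja /= js] := eqVneq j a; last by rewrite IH.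
rewrite (@eq_prodpow _ _ (fun=> 0%N)) ?prodpow0 // => t ts.
by case: eqP => // tj; rewrite -tj ts in as_.
Qed.

Lemma prodpow_head s k w : (exists2 i, i \in s & k i <> 0%N) ->
  exists2 i, i \in s & exists v, prodpow V s k w = V i v.
Proof.
elim: s => [[]//|a s IH [b]]; rewrite in_cons /=.
case ka: (k a) => [|m] bas kb; last by exists a; rewrite ?mem_head //; eexists.
have bs : b \in s by case/orP: bas => // /eqP ba; rewrite ba ka in kb.
have [j js [v ->]] := IH (ex_intro2 _ _ b bs kb).
by exists j; [rewrite in_cons js orbT | exists v].
Qed.

Hypothesis VZ : forall i a x, V i (a *: x) = a *: V i x.
Hypothesis V_comm : forall i j, i != j ->
  exists c, forall x, V j (V i x) = c *: V i (V j x).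

Lemma V_prodpow_notin i s k w : i \notin s ->
  exists c, V i (prodpow V s k w) = c *: prodpow V s k (V i w).
Proof.
elim: s => [|a s IH] /=; first by exists 1; rewrite scale1r.
rewrite in_cons negb_or eq_sym => /andP[ai /IH[c IHc]].
have [d Vad] := V_comm ai.
exists (d ^+ k a * c).
by rewrite (iter_commuteZ (VZ a) Vad) IHc (iter_scalable (VZ a)) scalerA.
Qed.

Lemma V_prodpow_in i s k w : uniq s -> i \in s ->
  exists c,
    V i (prodpow V s k w) = c *: prodpow V s (fun t => (k t + (t == i))%N) w.
Proof.
elim: s => [|a s IH] //= /andP[as_ us]; rewrite in_cons.
have [-> _|/negPf ia i_s] := eqVneq i a.
  exists 1; rewrite scale1r addn1; congr (V a (iter _ _ _)).
  apply: eq_prodpow => t ts.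
  by case: eqP => [tj|]; [rewrite -tj ts in as_ | rewrite addn0].
have [c IHc] := IH us i_s.
have ai : a != i by rewrite eq_sym ia.
have [d Vad] := V_comm ai.
exists (d ^+ k a * c).
by rewrite addn0 (iter_commuteZ (VZ a) Vad) IHc (iter_scalable (VZ a)) scalerA.
Qed.

End ProductsOfPowers.

Section DoublyNoncommuting.
Variables (R : realType) (H : lmodType R[i]) (ip : H -> H -> R[i]) (n : nat).
Variables (V Vs : 'I_n -> H -> H) (z : 'I_n -> 'I_n -> R[i]).
Hypothesis hip : is_inner_product ip.
Hypothesis hV : forall i, is_isometry ip (V i).
Hypothesis hVs : forall i, is_adjoint ip (V i) (Vs i).
Hypothesis z_norm1 : forall i j, i != j -> `|z i j| = 1.
Hypothesis Vs_V : forall i j, i != j ->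
  forall x, Vs i (V j x) = (z i j)^*%C *: V j (Vs i x).

Let VZ i := isometryZ hip (hV i).
Let VsK i := adjoint_isometryK hip (hV i) (hVs i).

Lemma V_comm i j : i != j ->
  forall x, V j (V i x) = (z i j)^*%C *: V i (V j x).
Proof.
move=> ij; exact: isometry_commute (hV i) (hVs i) _ _ (hV j) (z_norm1 ij) (Vs_V ij).
Qed.

Let V_projcomm i j : i != j ->
  exists c, forall x, V j (V i x) = c *: V i (V j x).
Proof. by move=> ij; exists (z i j)^*%C; apply: V_comm. Qed.

Lemma Vs_iter_V i j k x : i != j ->
  Vs i (iter k (V j) x) = (z i j)^*%C ^+ k *: iter k (V j) (Vs i x).
Proof. by move=> ij; apply: (iter_commuteZ (VZ j) (Vs_V ij)). Qed.

Lemma Hiso_finsums_adjoint t i v :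
  finsums [set: nat] (fun k => iter k (V i) @` kerO (Vs i)) v ->
  finsums [set: nat] (fun k => iter k (V i) @` kerO (Vs i)) (Vs t v).
Proof.
move=> [s [f [f_in _ ->]]].
rewrite (big_morph _ (adjointD hip (hVs t)) (adjoint0 hip (hVs t))).
have [->|ti] := eqVneq t i.
  (* [Vs i] kills the summand of degree 0 and lowers the others by one. *)
  exists [seq k.-1 | k <- s & (0 < k)%N], (fun k => Vs i (f k.+1)).
  split=> // [k _|k []//|].
    by have [w kw <-] := f_in k.+1 I; exists w => //; rewrite VsK.
  rewrite big_map big_filter [LHS](bigID (fun k => 0 < k)%N) /=.
  rewrite [X in _ + X]big1 ?addr0.
    by apply: eq_bigr => -[].
  move=> k; rewrite -eqn0Ngt => /eqP ->.
  by have [w kw <-] := f_in 0%N I.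
have it : i != t by rewrite eq_sym.
exists s, (fun k => Vs t (f k)); split=> // [k _|k []//].
have [w kw <-] := f_in k I.
exists ((z t i)^*%C ^+ k *: Vs t w); last by rewrite (iter_scalable (VZ i)) Vs_iter_V.
rewrite /kerO /= (adjointZ hip (hVs i)).
by rewrite (adjoint_kernel_stable hip (hVs i) (hVs t) (V_comm it)) ?scaler0.
Qed.

Lemma Hiso_adjoint t i x : Hiso ip (V i) (Vs i) x -> Hiso ip (V i) (Vs i) (Vs t x).
Proof.
apply: (hclosure_stable (adjointB hip (hVs t))).
  exact: adjoint_contraction (hV t) (hVs t).
exact: Hiso_finsums_adjoint.
Qed.

Lemma Huni_adjoint t j x : Huni (V j) x -> Huni (V j) (Vs t x).
Proof.
move=> xj k; have [->|tj] := eqVneq t j.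
  by have [y ->] := xj k.+1; exists y; rewrite VsK.
have [y ->] := xj k; exists ((z t j)^*%C ^+ k *: Vs t y).
by rewrite (iter_scalable (VZ j)) Vs_iter_V.
Qed.

Lemma HA_adjoint A t x : HA ip V Vs A x -> HA ip V Vs A (Vs t x).
Proof.
move=> [isoA uniAc].
by split=> i iA; [apply/Hiso_adjoint/isoA | apply/Huni_adjoint/uniAc].
Qed.

Lemma WA_sub_HA A : WA V Vs A `<=` HA ip V Vs A.
Proof.
move=> x WAx; have [x0 [x0_ker x_x0]] := WAx (fun=> 0%N).
rewrite prodpow0 in x_x0; subst x0.
split=> i iA.
  apply: (mem_hclosure hip); exists [:: 0%N], (fun k => iter k (V i) x).
  by split=> [k _|k []//|]; [exists x => //; apply: x0_ker | rewrite big_seq1].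
move=> k; have [y [_ ->]] := WAx (fun t => if t == i then k else 0%N).
by exists y; rewrite prodpow_single ?enum_uniq // mem_enum finset.in_setC.
Qed.

Section WanderingSubspace.
Variables (A : {set 'I_n}) (L : set H).
Hypothesis L_subspace : is_subspace ip L.
Hypothesis L_sub_HA : L `<=` HA ip V Vs A.
Hypothesis L_V_invariant : forall j, j \notin A -> forall x, L x -> L (V j x).
Hypothesis L_orth :
  orth_family ip (supported_on A) (fun k => prodpow V (enum A) k @` L).
Hypothesis HA_eq :
  HA ip V Vs A = hsum ip (supported_on A) (fun k => prodpow V (enum A) k @` L).

Local Notation P k := (prodpow V (enum A) k).

Lemma L_sum (I : Type) (s : seq I) (Q : pred I) (F : I -> H) :
  (forall k, Q k -> L (F k)) -> L (\sum_(k <- s | Q k) F k).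
Proof.
case: L_subspace => L0 LZD _; apply: big_ind => // x y Lx Ly.
by rewrite -[x]scale1r; apply: LZD.
Qed.

Lemma ip_L_prodpow k a l : supported_on A k -> k <> (fun=> 0%N) ->
  L a -> L l -> ip a (P k l) = 0.
Proof.
move=> kA k0 La Ll; rewrite (ipC hip) (L_orth kA _ k0 (y := a)) ?conjc0 //.
by exists a; rewrite ?prodpow0.
Qed.

Lemma mem_L_orth y : HA ip V Vs A y ->
  (forall k, supported_on A k -> k <> (fun=> 0%N) ->
     forall l, L l -> ip y (P k l) = 0) ->
  L y.
Proof.
rewrite HA_eq => HAy y_orth; case: (L_subspace) => _ _ L_closed.
apply: (hclosed_approx L_closed HAy) => _ [s [f [f_in f0 ->]]].
pose a := \sum_(k <- s | k == fun=> 0%N) f k.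
have La : L a.
  apply: L_sum => k /eqP ->.
  by have [l Ll <-] := f_in _ (fun _ _ => erefl); rewrite prodpow0.
(* [a] is the degree-0 part of the sum; [a - y] is orthogonal to the other
   parts, so [a] is at least as close to [y] as the whole sum. *)
exists a => //; rewrite (bigID (fun k => k == fun=> 0%N)) /= -/a addrAC.
apply: (hnorm_le_addr_orth hip).
rewrite (big_morph _ (fun u v => ipDr hip u v (a - y)) (ip0r hip _)).
rewrite big1 // => k /eqP k0.
have [kA|/f0->] := pselect (supported_on A k); last exact: ip0r.
have [l Ll <-] := f_in k kA.
by rewrite (ipBl hip) ip_L_prodpow // y_orth // subrr.
Qed.

Lemma L_sub_ker i l : i \in A -> L l -> Vs i l = 0.
Proof.
move=> iA Ll.
have Vsl_orth k : supported_on A k -> forall l', L l' -> ip (Vs i l) (P k l') = 0.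
  move=> kA l' Ll'; rewrite (adjoint_ipl hip (hVs i)).
  have [|c ->] := V_prodpow_in VZ V_projcomm (i := i) k l' (enum_uniq (mem A)).
    by rewrite mem_enum.
  rewrite (ipZr hip) ip_L_prodpow ?mulr0 //.
    by move=> t tA; rewrite kA //; case: eqP tA => // ->; rewrite iA.
  by move/(congr1 (fun k => k i)); rewrite eqxx addn1.
have L_Vsl : L (Vs i l).
  by apply: mem_L_orth => [|k kA _]; [exact/HA_adjoint/L_sub_HA | exact: Vsl_orth].
by apply: (ip_eq0 hip); have := Vsl_orth _ (fun _ _ => erefl) _ L_Vsl; rewrite prodpow0.
Qed.

Lemma L_sub_V j l : j \notin A -> L l -> exists2 y, L y & l = V j y.
Proof.
move=> jA Ll; have [_ /(_ j jA 1%N) [y /= l_Vy]] := L_sub_HA Ll.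
exists y => //; apply: mem_L_orth => [|k kA k0 l' Ll'].
  by rewrite -(VsK j y) -l_Vy; apply/HA_adjoint/L_sub_HA.
have [|c Vj_P] := V_prodpow_notin VZ V_projcomm (i := j) (s := enum A) k l'.
  by rewrite mem_enum.
case: (hV j) => _ Vj_ip.
rewrite -Vj_ip -l_Vy Vj_P (ipZr hip) ip_L_prodpow ?mulr0 //.
exact: L_V_invariant.
Qed.

Lemma L_sub_iter_V j k l : j \notin A -> L l -> exists2 y, L y & l = iter k (V j) y.
Proof.
move=> jA; elim: k l => [|k IH] l Ll; first by exists l.
have [y Ly ->] := IH l Ll; have [y' Ly' ->] := L_sub_V jA Ly.
by exists y'; rewrite // iterSr.
Qed.

Lemma L_sub_prodpow s m l : (forall j, j \in s -> j \notin A) -> L l ->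
  exists2 y, L y & l = prodpow V s m y.
Proof.
elim: s l => [|a s IH] l sAc Ll /=; first by exists l.
have [y Ly ->] := L_sub_iter_V (m a) (sAc a (mem_head _ _)) Ll.
have [|y' Ly' ->] := IH y _ Ly; last by exists y'.
by move=> j js; apply: sAc; rewrite in_cons js orbT.
Qed.

Lemma L_sub_WA : L `<=` WA V Vs A.
Proof.
move=> l Ll m; have [|y Ly ->] := L_sub_prodpow (s := enum (~: A)) m _ Ll.
  by move=> j; rewrite mem_enum finset.in_setC.
by exists y; split=> // i iA; apply: L_sub_ker.
Qed.

Lemma WA_sub_L : WA V Vs A `<=` L.
Proof.
move=> x WAx; apply: mem_L_orth (WA_sub_HA WAx) _ => k kA k0 l Ll.
have [x0 [x0_ker x_x0]] := WAx (fun=> 0%N); rewrite prodpow0 in x_x0; subst x0.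
have [|i iA [v ->]] := prodpow_head V (s := enum A) (k := k) l.
  have /existsNP[i ki] : ~ forall i, k i = 0%N by move=> k_eq0; apply/k0/funext.
  by exists i; rewrite // mem_enum; apply/negPn/negP => /kA.
rewrite mem_enum in iA.
by rewrite -(adjoint_ipl hip (hVs i)) x0_ker // (ip0l hip).
Qed.

Lemma wandering_subspace_eq_WA : L = WA V Vs A.
Proof. by apply/seteqP; split; [exact: L_sub_WA | exact: WA_sub_L]. Qed.

End WanderingSubspace.

End DoublyNoncommuting.

Unset Implicit Arguments.

Theorem proposition3p9 (R : realType) (H : lmodType R[i])
  (ip : H -> H -> R[i]) (n : nat)
  (V Vs : 'I_n -> H -> H) (z : 'I_n -> 'I_n -> R[i])
  (A : {set 'I_n}) (L : set H) :
  is_inner_product ip -> hcomplete ip -> (0 < n)%N ->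
  doubly_noncommuting ip V Vs z ->
  A != finset.set0 :> {set 'I_n} ->
  is_subspace ip L ->
  L `<=` HA ip V Vs A ->
  (forall j, j \notin A -> forall x, L x -> L (V j x)) ->
  orth_family ip (supported_on A) (fun k => prodpow V (enum A) k @` L) ->
  HA ip V Vs A = hsum ip (supported_on A) (fun k => prodpow V (enum A) k @` L) ->
  L = WA V Vs A.
Proof.
move=> hip _ _ [hV hVs hz Vs_V] _ L_subspace L_sub_HA L_V_invariant L_orth HA_eq.
have z_norm1 i j (ij : i != j) : `|z i j| = 1 by case: (hz i j ij).
exact: (wandering_subspace_eq_WA hip hV hVs z_norm1 Vs_V
          L_subspace L_sub_HA L_V_invariant L_orth HA_eq).
Qed.
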